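(* Let $\bm{A}\in\mathbb{R}^{d\times K}$ with $K\le d$, let $g(\bm{Q})=\langle\bm{A},\bm{Q}\rangle+\delta_{{\rm St}(d,K)}(\bm{Q})$, and define $R:{\rm St}(d,K)\to\mathbb{R}^{d\times K}$ by $R(\bm{Q})=\bm{A}-\bm{Q}\bm{A}^T\bm{Q}$. Then for every $\bm{Q}\in{\rm St}(d,K)$, $$\operatorname{dist}(\bm{0},\partial g(\bm{Q}))=\Big\|\Big(\bm{I}_d-\tfrac12\bm{Q}\bm{Q}^T\Big)R(\bm{Q})\Big\|_F\quad\text{and}\quad\tfrac12\|R(\bm{Q})\|_F\le\operatorname{dist}(\bm{0},\partial g(\bm{Q}))\le\|R(\bm{Q})\|_F.$$ In particular, $\bm{Q}$ is a limiting critical point of $g$ (i.e. $\bm{0}\in\partial g(\bm{Q})$) if and only if $\bm{Q}\in{\rm St}(d,K)$ and $R(\bm{Q})=\bm{0}$.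
   Context: ${\rm St}(d,K)=\{\bm{Q}\in\mathbb{R}^{d\times K}:\bm{Q}^T\bm{Q}=\bm{I}_K\}$; $\langle\bm{A},\bm{B}\rangle=\operatorname{tr}(\bm{A}^T\bm{B})$; $\delta_{\mathcal{S}}$ is the indicator function of $\mathcal{S}$; $\partial$ denotes the limiting subdifferential; $\operatorname{dist}(\bm{0},S)=\inf_{\bm{s}\in S}\|\bm{s}\|_F$. *)

From HB Require Import structures.
From mathcomp Require Import all_boot all_order all_algebra.
From mathcomp Require Import all_classical all_reals all_analysis.
Set Implicit Arguments. Unset Strict Implicit. Unset Printing Implicit Defensive.
Import Order.TTheory GRing.Theory Num.Theory numFieldNormedType.Exports.
Local Open Scope classical_set_scope.
Local Open Scope ring_scope.

Section Defs.
Variable R : realType.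

Definition mxdot m n (A B : 'M[R]_(m, n)) : R := \tr (A^T *m B).

Definition frob m n (A : 'M[R]_(m, n)) : R :=
  Num.sqrt (\sum_(i < m) \sum_(j < n) A i j ^+ 2).

Definition stiefel d K : set 'M[R]_(d, K) := [set Q | Q^T *m Q = 1%:M].

Definition indic (T : Type) (S : set T) (x : T) : \bar R :=
  if `[< S x >] then 0%E else +oo%E.

Definition gfun d K (A : 'M[R]_(d, K)) (Q : 'M[R]_(d, K)) : \bar R :=
  ((mxdot A Q)%:E + indic (@stiefel d K) Q)%E.

(* Frechet (regular) subdifferential, liminf definition written with eps/delta. *)
Definition frechet_subdiff m n (f : 'M[R]_(m, n) -> \bar R) (X : 'M[R]_(m, n))
  : set 'M[R]_(m, n) :=
  [set V | f X \is a fin_num /\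
     forall e : R, 0 < e -> exists2 delta : R, 0 < delta &
       forall Y, frob (Y - X) < delta ->
         ((fine (f X) + mxdot V (Y - X) - e * frob (Y - X))%:E <= f Y)%E].

Definition limiting_subdiff m n (f : 'M[R]_(m, n) -> \bar R) (X : 'M[R]_(m, n))
  : set 'M[R]_(m, n) :=
  [set V | f X \is a fin_num /\
     exists (Xs Vs : nat -> 'M[R]_(m, n)),
       (forall k, frechet_subdiff f (Xs k) (Vs k)) /\
       (fun k => frob (Xs k - X)) @ \oo --> 0%R /\
       (fun k => f (Xs k)) @ \oo --> f X /\
       (fun k => frob (Vs k - V)) @ \oo --> 0%R].

(* dist(0, S) = inf_{s in S} ||s||_F  (= +oo for empty S). *)
Definition dist0 m n (S : set 'M[R]_(m, n)) : \bar R :=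
  ereal_inf [set (frob V)%:E | V in S].

End Defs.

From Pilot Require Import Defs.
From HB Require Import structures.
From mathcomp Require Import all_boot all_order all_algebra.
From mathcomp Require Import all_classical all_reals all_analysis.
From mathcomp Require Import ring lra.
Import Order.TTheory GRing.Theory Num.Theory numFieldNormedType.Exports.
Local Open Scope classical_set_scope.
Local Open Scope ring_scope.
Set Implicit Arguments. Unset Strict Implicit. Unset Printing Implicit Defensive.

(* Write N := V - A for a candidate subgradient V of g at Q.  On St(d,K) the
   objective is linear, so V is a Frechet subgradient exactly when N is a
   Frechet normal to St(d,K) at Q.  For symmetric S the matrix Q S is such a
   normal, because <Q S, Y - Q> = -<S, (Y - Q)^T (Y - Q)>/2 = O(|Y - Q|^2) on
   St(d,K); conversely, moving Q along the plane rotations of the coordinates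
   (i, j) forces (N Q^T)_ij <= (N Q^T)_ji, so N Q^T is symmetric.  Symmetry of
   N Q^T survives limits, hence every limiting subgradient V satisfies it, which
   makes V - V* orthogonal to V* := A - Q sym(Q^T A) = (I - Q Q^T/2) R(Q)
   (Q^T V* is skew); V* itself is a subgradient, so it realizes the distance.
   Finally I - Q Q^T/2 fixes the part of a matrix orthogonal to the range of Q
   and halves the rest, whence the two bounds. *)

Section Frobenius.
Variable R : realType.
Implicit Types m n p : nat.

Lemma mxdotE m n (X Y : 'M[R]_(m, n)) :
  mxdot X Y = \sum_i \sum_j X i j * Y i j.
Proof.
rewrite /mxdot /mxtrace exchange_big /=; apply: eq_bigr => j _.
by rewrite mxE; apply: eq_bigr => i _; rewrite mxE.
Qed.

Lemma mxdotC m n (X Y : 'M[R]_(m, n)) : mxdot X Y = mxdot Y X.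
Proof. by rewrite !mxdotE; apply: eq_bigr => i _; apply: eq_bigr => j _; rewrite mulrC. Qed.

Lemma mxdotDr m n (X Y Z : 'M[R]_(m, n)) : mxdot X (Y + Z) = mxdot X Y + mxdot X Z.
Proof. by rewrite /mxdot mulmxDr mxtraceD. Qed.

Lemma mxdotZr m n a (X Y : 'M[R]_(m, n)) : mxdot X (a *: Y) = a * mxdot X Y.
Proof. by rewrite /mxdot -scalemxAr mxtraceZ. Qed.

Lemma mxdotNr m n (X Y : 'M[R]_(m, n)) : mxdot X (- Y) = - mxdot X Y.
Proof. by rewrite -scaleN1r mxdotZr mulN1r. Qed.

Lemma mxdotBr m n (X Y Z : 'M[R]_(m, n)) : mxdot X (Y - Z) = mxdot X Y - mxdot X Z.
Proof. by rewrite mxdotDr mxdotNr. Qed.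

Lemma mxdotDl m n (X Y Z : 'M[R]_(m, n)) : mxdot (X + Y) Z = mxdot X Z + mxdot Y Z.
Proof. by rewrite mxdotC mxdotDr !(mxdotC Z). Qed.

Lemma mxdotZl m n a (X Y : 'M[R]_(m, n)) : mxdot (a *: X) Y = a * mxdot X Y.
Proof. by rewrite mxdotC mxdotZr mxdotC. Qed.

Lemma mxdotBl m n (X Y Z : 'M[R]_(m, n)) : mxdot (X - Y) Z = mxdot X Z - mxdot Y Z.
Proof. by rewrite mxdotC mxdotBr !(mxdotC Z). Qed.

Lemma mxdot_tr m n (X Y : 'M[R]_(m, n)) : mxdot X^T Y^T = mxdot X Y.
Proof. by rewrite /mxdot trmxK -mxtrace_tr trmx_mul trmxK mxtrace_mulC. Qed.

Lemma mxdot_mull m n p (X : 'M[R]_(m, n)) (Y : 'M[R]_(n, p)) Z :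
  mxdot (X *m Y) Z = mxdot Y (X^T *m Z).
Proof. by rewrite /mxdot trmx_mul mulmxA. Qed.

Lemma mxdot_mulr m n p (X : 'M[R]_(m, p)) (Y : 'M[R]_(m, n)) (Z : 'M[R]_(n, p)) :
  mxdot X (Y *m Z) = mxdot (X *m Z^T) Y.
Proof. by rewrite /mxdot trmx_mul trmxK mulmxA mxtrace_mulC mulmxA. Qed.

Lemma mxdot_delta m n (X : 'M[R]_(m, n)) i j : mxdot X (delta_mx i j) = X i j.
Proof.
rewrite mxdotE (bigD1 i) //= (bigD1 j) //= mxE !eqxx mulr1.
rewrite big1 => [|k /negbTE ki]; last by rewrite mxE eqxx ki andbF mulr0.
rewrite big1 ?addr0 // => k /negbTE ki; apply: big1 => l _.
by rewrite mxE ki mulr0.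
Qed.

Lemma mxdot_sym_skew n (S W : 'M[R]_n) : S^T = S -> W^T = - W -> mxdot S W = 0.
Proof.
move=> hS hW; have : mxdot S W = - mxdot S W by rewrite -{1}mxdot_tr hS hW mxdotNr.
lra.
Qed.

Lemma CauchySchwarz_sum (I : finType) (a b : I -> R) :
  (\sum_i a i * b i) ^+ 2 <= (\sum_i a i ^+ 2) * (\sum_i b i ^+ 2).
Proof.
set A := \sum_i a i ^+ 2; set B := \sum_i b i ^+ 2; set C := \sum_i a i * b i.
have B0 : 0 <= B by apply: sumr_ge0 => i _; exact: sqr_ge0.
have [B_eq0|B_neq0] := eqVneq B 0.
  have b0 i : b i = 0.
    apply/eqP; rewrite -sqrf_eq0; move/eqP: B_eq0.
    rewrite psumr_eq0 => [/allP/(_ i (mem_index_enum i))//|k _]; exact: sqr_ge0.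
  rewrite /C big1 => [|i _]; last by rewrite b0 mulr0.
  by rewrite expr0n mulr_ge0 ?sumr_ge0 // => i _; exact: sqr_ge0.
have : 0 <= \sum_i (a i * B - C * b i) ^+ 2 by apply: sumr_ge0 => i _; exact: sqr_ge0.
have -> : \sum_i (a i * B - C * b i) ^+ 2 = B * (A * B - C ^+ 2).
  transitivity (\sum_i (B ^+ 2 * a i ^+ 2 - (2 * B * C) * (a i * b i) + C ^+ 2 * b i ^+ 2)).
    by apply: eq_bigr => i _; ring.
  rewrite big_split /= sumrB -!mulr_sumr -/A -/B -/C; ring.
by rewrite pmulr_rge0 ?subr_ge0 // lt_def B_neq0.
Qed.

Let sumsq_ge0 m n (X : 'M[R]_(m, n)) : 0 <= \sum_i \sum_j X i j ^+ 2.
Proof. by rewrite sumr_ge0 // => i _; rewrite sumr_ge0 // => j _; rewrite sqr_ge0. Qed.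

Lemma frobE m n (X : 'M[R]_(m, n)) : frob X = Num.sqrt (mxdot X X).
Proof.
by rewrite /frob mxdotE; congr Num.sqrt; apply: eq_bigr => i _; apply: eq_bigr => j _.
Qed.

Lemma mxdot_self_ge0 m n (X : 'M[R]_(m, n)) : 0 <= mxdot X X.
Proof. by rewrite mxdotE; exact: sumsq_ge0. Qed.

Lemma frob_ge0 m n (X : 'M[R]_(m, n)) : 0 <= frob X.
Proof. exact: sqrtr_ge0. Qed.

Lemma frob_sqr m n (X : 'M[R]_(m, n)) : frob X ^+ 2 = mxdot X X.
Proof. by rewrite frobE sqr_sqrtr // mxdot_self_ge0. Qed.

Lemma frob0 m n : frob (0 : 'M[R]_(m, n)) = 0.
Proof. by rewrite frobE /mxdot mulmx0 mxtrace0 sqrtr0. Qed.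

Lemma frob_tr m n (X : 'M[R]_(m, n)) : frob X^T = frob X.
Proof. by rewrite !frobE mxdot_tr. Qed.

Lemma normr_entry_le_frob m n (X : 'M[R]_(m, n)) i j : `|X i j| <= frob X.
Proof.
rewrite -sqrtr_sqr /frob ler_sqrt ?sumsq_ge0 //.
rewrite (bigD1 i) //= (bigD1 j) //= -addrA lerDl addr_ge0 ?sumr_ge0 // => [k _|k _].
  exact: sqr_ge0.
by rewrite sumr_ge0 // => l _; exact: sqr_ge0.
Qed.

Lemma CauchySchwarz_mxdot m n (X Y : 'M[R]_(m, n)) : `|mxdot X Y| <= frob X * frob Y.
Proof.
rewrite /frob -sqrtrM ?sumsq_ge0 // -sqrtr_sqr ler_sqrt ?mulr_ge0 ?sumsq_ge0 //.
rewrite mxdotE !pair_bigA /=.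
exact: (CauchySchwarz_sum (fun p : 'I_m * 'I_n => X p.1 p.2)
                          (fun p : 'I_m * 'I_n => Y p.1 p.2)).
Qed.

Lemma frob_sqrD m n (X Y : 'M[R]_(m, n)) :
  frob (X + Y) ^+ 2 = frob X ^+ 2 + 2 * mxdot X Y + frob Y ^+ 2.
Proof. by rewrite !frob_sqr mxdotDl !mxdotDr (mxdotC Y X); ring. Qed.

Lemma frobD m n (X Y : 'M[R]_(m, n)) : frob (X + Y) <= frob X + frob Y.
Proof.
rewrite -ler_sqr ?nnegrE ?addr_ge0 ?frob_ge0 // frob_sqrD sqrrD.
have := le_trans (ler_norm _) (CauchySchwarz_mxdot X Y); lra.
Qed.

Lemma frobZ m n a (X : 'M[R]_(m, n)) : frob (a *: X) = `|a| * frob X.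
Proof. by rewrite !frobE mxdotZl mxdotZr mulrA -expr2 sqrtrM ?sqr_ge0 // sqrtr_sqr. Qed.

Lemma frobN m n (X : 'M[R]_(m, n)) : frob (- X) = frob X.
Proof. by rewrite -scaleN1r frobZ normrN normr1 mul1r. Qed.

Lemma frobM m n p (X : 'M[R]_(m, n)) (Y : 'M[R]_(n, p)) :
  frob (X *m Y) <= frob X * frob Y.
Proof.
rewrite /frob -sqrtrM ?sumsq_ge0 // ler_sqrt ?mulr_ge0 ?sumsq_ge0 //.
rewrite mulr_suml; apply: ler_sum => i _.
rewrite exchange_big /= mulr_sumr; apply: ler_sum => j _.
by rewrite mxE; exact: CauchySchwarz_sum.
Qed.

Lemma frob_sqrD_orth m n (X Y : 'M[R]_(m, n)) :
  mxdot X Y = 0 -> frob (X + Y) ^+ 2 = frob X ^+ 2 + frob Y ^+ 2.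
Proof. by move=> XY; rewrite frob_sqrD XY mulr0 addr0. Qed.

End Frobenius.

Definition frechet_normal (R : realType) m n (S : set 'M[R]_(m, n)) (X N : 'M[R]_(m, n)) :=
  forall e : R, 0 < e -> exists2 delta : R, 0 < delta &
    forall Y, S Y -> frob (Y - X) < delta -> mxdot N (Y - X) <= e * frob (Y - X).

Section Objective.
Variables (R : realType) (d K : nat) (A : 'M[R]_(d, K)).

Lemma gfun_stiefel Q : stiefel Q -> gfun A Q = (mxdot A Q)%:E.
Proof. by move=> hQ; rewrite /gfun /Defs.indic asboolT // adde0. Qed.

Lemma gfun_nstiefel Q : ~ stiefel Q -> gfun A Q = +oo%E.
Proof. by move=> hQ; rewrite /gfun /Defs.indic asboolF. Qed.

Lemma gfun_fin_stiefel Q : gfun A Q \is a fin_num -> stiefel Q.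
Proof. by move=> hQ; apply/not_notP => /gfun_nstiefel hn; rewrite hn in hQ. Qed.

Lemma frechet_subdiff_gfunE Q V : stiefel Q ->
  frechet_subdiff (gfun A) Q V <-> frechet_normal (@stiefel R d K) Q (V - A).
Proof.
move=> hQ; split=> [[_ hV] e /hV[delta delta0 hdelta]|hV].
  exists delta => // Y hY /hdelta; rewrite !gfun_stiefel //= lee_fin mxdotBl mxdotBr.
  lra.
split=> [|e /hV[delta delta0 hdelta]]; first by rewrite gfun_stiefel.
exists delta => // Y hYQ; have [hY|hY] := pselect (stiefel Y); last first.
  by rewrite (gfun_nstiefel hY) leey.
have := hdelta Y hY hYQ; rewrite !gfun_stiefel //= lee_fin mxdotBl mxdotBr.
lra.
Qed.

End Objective.

Section StiefelNormalCone.
Variables (R : realType) (d K : nat).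
Implicit Types (Q Y : 'M[R]_(d, K)) (S : 'M[R]_K).

Lemma stiefel_sub_cross Q Y : stiefel Q -> stiefel Y ->
  Q^T *m (Y - Q) + (Y - Q)^T *m Q = - ((Y - Q)^T *m (Y - Q)).
Proof.
rewrite /stiefel /= => hQ hY; rewrite !raddfB /= !(mulmxBl, mulmxBr) hQ hY.
move: (Q^T *m Y) (Y^T *m Q) => M N; apply/matrixP => i j; rewrite !mxE; ring.
Qed.

Lemma mxdot_stiefel_sub Q Y S : stiefel Q -> stiefel Y -> S^T = S ->
  mxdot (Q *m S) (Y - Q) = - 2^-1 * mxdot S ((Y - Q)^T *m (Y - Q)).
Proof.
move=> hQ hY hS; set D := Y - Q.
have hsym : mxdot S (D^T *m Q) = mxdot S (Q^T *m D).
  by rewrite -{1}hS -mxdot_tr trmx_mul !trmxK.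
have cross := stiefel_sub_cross hQ hY; rewrite -/D in cross.
by rewrite mxdot_mull -[D^T *m D]opprK -cross mxdotNr mxdotDr hsym; field.
Qed.

Lemma frechet_normal_stiefel_sym Q S : stiefel Q -> S^T = S ->
  frechet_normal (@stiefel R d K) Q (Q *m S).
Proof.
move=> hQ hS e e0; have S1 : 0 < frob S + 1 by rewrite ltr_wpDl ?frob_ge0.
exists (2 * e / (frob S + 1)); first by rewrite divr_gt0 ?mulr_gt0.
move=> Y hY; rewrite mxdot_stiefel_sub //; set D := Y - Q => hD.
have DD : `|mxdot S (D^T *m D)| <= frob S * frob D ^+ 2.
  apply: le_trans (CauchySchwarz_mxdot _ _) _; rewrite ler_wpM2l ?frob_ge0 //.
  by apply: le_trans (frobM _ _) _; rewrite frob_tr.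
have hD' : frob D * (frob S + 1) < 2 * e by rewrite -ltr_pdivlMr.
have := frob_ge0 D; have := frob_ge0 S; have := ler_norm (- mxdot S (D^T *m D)).
rewrite normrN; nra.
Qed.

End StiefelNormalCone.

Lemma le0_of_small_perturbation (R : realType) (b c f : R) :
  (forall e, 0 < e -> exists2 t0, 0 < t0 & forall t, 0 < t <= t0 -> b <= t * c + e * f) ->
  b <= 0.
Proof.
move=> hb; rewrite leNgt; apply/negP => b0.
have f1 : 0 < `|f| + 1 by rewrite ltr_pwDr ?normr_ge0.
have c1 : 0 < `|c| + 1 by rewrite ltr_pwDr ?normr_ge0.
pose e := b / (2 * (`|f| + 1)).
have e0 : 0 < e by rewrite divr_gt0 ?mulr_gt0.
have ef : e * (2 * (`|f| + 1)) = b by rewrite divfK // gt_eqF ?mulr_gt0.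
have [t0 t00 ht0] := hb e e0.
pose t := Num.min t0 (b / (2 * (`|c| + 1))).
have t0' : 0 < t by rewrite lt_min t00 divr_gt0 ?mulr_gt0.
have tc : t * (2 * (`|c| + 1)) <= b by rewrite -ler_pdivlMr ?mulr_gt0 // ge_min lexx orbT.
have := ht0 t; rewrite t0' ge_min lexx /= => /(_ isT).
have := ler_norm c; have := ler_norm f; have := normr_ge0 f.
nra.
Qed.

Section PlaneRotation.
Variables (R : realType) (d : nat) (i j : 'I_d).
Hypothesis neq_ij : i != j.

Definition plane_skew : 'M[R]_d := delta_mx i j - delta_mx j i.
Definition plane_proj : 'M[R]_d := delta_mx i i + delta_mx j j.

(* For [t = tan (theta / 2)] this is the rotation by [theta] in the coordinate
   plane [(i, j)]. *)
Definition plane_rot (t : R) : 'M[R]_d :=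
  1%:M + (1 + t ^+ 2)^-1 *: (2 * t *: plane_skew - 2 * t ^+ 2 *: plane_proj).

Lemma tr_plane_skew : plane_skew^T = - plane_skew.
Proof. by rewrite raddfB /= !trmx_delta opprB. Qed.

Lemma tr_plane_proj : plane_proj^T = plane_proj.
Proof. by rewrite raddfD /= !trmx_delta. Qed.

Let neq_ji : j != i. Proof. by rewrite eq_sym. Qed.

Let plane_mulE := (mulmxDl, mulmxDr, mulmxBl, mulmxBr, mulmxN, mulNmx, mul_delta_mx_cond, eqxx,
  negbTE neq_ij, negbTE neq_ji, mulr1n, mulr0n).

Lemma plane_skew_sqr : plane_skew *m plane_skew = - plane_proj.
Proof.
by rewrite /plane_skew /plane_proj !plane_mulE; apply/matrixP => a b; rewrite !mxE; ring.
Qed.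

Lemma plane_skew_proj : plane_skew *m plane_proj = plane_skew.
Proof.
by rewrite /plane_skew /plane_proj !plane_mulE; apply/matrixP => a b; rewrite !mxE; ring.
Qed.

Lemma plane_proj_skew : plane_proj *m plane_skew = plane_skew.
Proof.
by rewrite /plane_skew /plane_proj !plane_mulE; apply/matrixP => a b; rewrite !mxE; ring.
Qed.

Lemma plane_proj_idem : plane_proj *m plane_proj = plane_proj.
Proof.
by rewrite /plane_proj !plane_mulE; apply/matrixP => a b; rewrite !mxE; ring.
Qed.

Lemma tr_plane_rot t : (plane_rot t)^T = plane_rot (- t).
Proof.
move: tr_plane_skew tr_plane_proj; rewrite /plane_rot.
move: plane_skew plane_proj => W P /matrixP hW /matrixP hP; apply/matrixP => a b.
have := hW b a; have := hP b a; rewrite !mxE => -> ->; rewrite sqrrN eq_sym; ring.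
Qed.

Lemma plane_rot_orthogonal t : (plane_rot t)^T *m plane_rot t = 1%:M.
Proof.
have u0 : 1 + t ^+ 2 != 0 by rewrite gt_eqF // ltr_pwDl ?sqr_ge0.
rewrite tr_plane_rot /plane_rot !(mulmxDl, mulmxDr, mul1mx, mulmx1).
rewrite -!scalemxAl -!scalemxAr !(mulmxBl, mulmxBr) -!scalemxAl -!scalemxAr.
rewrite plane_skew_sqr plane_skew_proj plane_proj_skew plane_proj_idem sqrrN.
by move: plane_skew plane_proj => W P; apply/matrixP => a b; rewrite !mxE; field.
Qed.

Lemma stiefel_plane_rot K (X : 'M[R]_(d, K)) t : stiefel X -> stiefel (plane_rot t *m X).
Proof.
by rewrite /stiefel /= => hX; rewrite trmx_mul mulmxA -(mulmxA X^T) plane_rot_orthogonal mulmx1.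
Qed.

Lemma plane_rot_subr K (X : 'M[R]_(d, K)) t : plane_rot t *m X - X =
  (1 + t ^+ 2)^-1 *: (2 * t *: (plane_skew *m X) - 2 * t ^+ 2 *: (plane_proj *m X)).
Proof. by rewrite mulmxDl mul1mx addrAC subrr add0r -scalemxAl mulmxBl -!scalemxAl. Qed.

Lemma mxdot_plane_skew K (N X : 'M[R]_(d, K)) :
  mxdot N (plane_skew *m X) = (N *m X^T) i j - (N *m X^T) j i.
Proof. by rewrite mxdot_mulr mxdotBr !mxdot_delta. Qed.

Lemma mxdot_plane_rot_subr K (N X : 'M[R]_(d, K)) t :
  mxdot N (plane_rot t *m X - X) = (1 + t ^+ 2)^-1 * (2 * t) *
    (mxdot N (plane_skew *m X) - t * mxdot N (plane_proj *m X)).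
Proof. by rewrite plane_rot_subr mxdotZr mxdotBr !mxdotZr; ring. Qed.

Lemma frob_plane_rot_subr K (X : 'M[R]_(d, K)) t : 0 <= t ->
  frob (plane_rot t *m X - X) <= (1 + t ^+ 2)^-1 * (2 * t) *
    (frob (plane_skew *m X) + t * frob (plane_proj *m X)).
Proof.
move=> t0; have u0 : 0 < 1 + t ^+ 2 by rewrite ltr_pwDl ?sqr_ge0.
rewrite plane_rot_subr frobZ gtr0_norm ?invr_gt0 // -mulrA ler_wpM2l ?invr_ge0 ?(ltW u0) //.
apply: le_trans (frobD _ _) _; rewrite frobN !frobZ !ger0_norm ?mulr_ge0 ?sqr_ge0 //.
nra.
Qed.

Lemma frechet_normal_plane_skew K (X N : 'M[R]_(d, K)) :
  stiefel X -> frechet_normal (@stiefel R d K) X N -> mxdot N (plane_skew *m X) <= 0.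
Proof.
move=> hX hN; set b := mxdot N _; set c := mxdot N (plane_proj *m X).
set f1 := frob (plane_skew *m X); set f2 := frob (plane_proj *m X).
have f10 : 0 <= f1 := frob_ge0 _; have f20 : 0 <= f2 := frob_ge0 _.
(* At the rotated point the Frechet inequality, divided by
   w = 2 t / (1 + t^2), reads b - t c <= e (f1 + t f2). *)
apply: (@le0_of_small_perturbation _ b c (f1 + f2)) => e e0.
have [delta delta0 hdelta] := hN e e0.
have f0 : 0 < 2 * (f1 + f2 + 1) by rewrite mulr_gt0 // ltr_wpDl ?addr_ge0.
exists (Num.min 1 (delta / (2 * (f1 + f2 + 1)))); first by rewrite lt_min ltr01 divr_gt0.
move=> t /andP[t0]; rewrite le_min => /andP[t1]; rewrite ler_pdivlMr // => tdelta.
set w := (1 + t ^+ 2)^-1 * (2 * t).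
have u0 : 0 < 1 + t ^+ 2 by rewrite ltr_pwDl ?sqr_ge0.
have w0 : 0 < w by rewrite mulr_gt0 ?invr_gt0 ?mulr_gt0.
have w2t : w <= 2 * t by rewrite ler_piMl ?mulr_ge0 ?(ltW t0) // invf_le1 // lerDl sqr_ge0.
have hfrob := frob_plane_rot_subr X (ltW t0); rewrite -/w -/f1 -/f2 in hfrob.
have tf2 : t * f2 <= f2 by rewrite ler_piMl.
have hclose : frob (plane_rot t *m X - X) < delta.
  apply: (le_lt_trans hfrob); apply: lt_le_trans tdelta; nra.
have := hdelta _ (stiefel_plane_rot t hX) hclose.
rewrite mxdot_plane_rot_subr -/w -/b -/c => hb.
have : w * (b - t * c) <= w * (e * (f1 + t * f2)).
  by apply: (le_trans hb); rewrite mulrCA ler_wpM2l ?(ltW e0).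
rewrite ler_pM2l //; nra.
Qed.

End PlaneRotation.

Lemma frechet_normal_stiefel_trmx_sym (R : realType) d K (X N : 'M[R]_(d, K)) :
  stiefel X -> frechet_normal (@stiefel R d K) X N -> (N *m X^T)^T = N *m X^T.
Proof.
move=> hX hN; apply/matrixP => i j; rewrite mxE.
have [<-|ij] := eqVneq i j; first by [].
have ji : j != i by rewrite eq_sym.
have := frechet_normal_plane_skew ij hX hN; have := frechet_normal_plane_skew ji hX hN.
rewrite !mxdot_plane_skew; lra.
Qed.

Section EntrywiseLimits.
Variable R : realType.

Lemma cvg_frob_entry m n (Xs : nat -> 'M[R]_(m, n)) X :
  (fun k => frob (Xs k - X)) @ \oo --> 0 -> forall i j, (fun k => Xs k i j) @ \oo --> X i j.
Proof.
move=> hX i j; apply/cvgrPdist_lt => e e0; near=> k.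
rewrite distrC; have := normr_entry_le_frob (Xs k - X) i j; rewrite !mxE.
move/le_lt_trans; apply; rewrite -[frob _]ger0_norm ?frob_ge0 //.
by near: k; exact: cvgr0_norm_lt.
Unshelve. all: end_near.
Qed.

Lemma cvg_mulmx_entry m n p (Xs : nat -> 'M[R]_(m, n)) (Ys : nat -> 'M[R]_(n, p))
    (X : 'M[R]_(m, n)) (Y : 'M[R]_(n, p)) :
  (forall i j, (fun k => Xs k i j) @ \oo --> X i j) ->
  (forall i j, (fun k => Ys k i j) @ \oo --> Y i j) ->
  forall i j, (fun k => (Xs k *m Ys k) i j) @ \oo --> (X *m Y) i j.
Proof.
move=> hX hY i j; rewrite mxE; under eq_cvg do rewrite mxE.
by apply: cvg_big => [|l _]; [exact: add_continuous | exact: cvgM].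
Qed.

End EntrywiseLimits.

Lemma limiting_subdiff_gfun_sym (R : realType) d K (A Q V : 'M[R]_(d, K)) :
  limiting_subdiff (gfun A) Q V -> stiefel Q /\ ((V - A) *m Q^T)^T = (V - A) *m Q^T.
Proof.
move=> [hfin [Xs [Vs [hF [hX [_ hV]]]]]]; split; first exact: gfun_fin_stiefel hfin.
pose M k := (Vs k - A) *m (Xs k)^T.
have M_sym k i j : M k j i = M k i j.
  have hXk := gfun_fin_stiefel (hF k).1.
  have /matrixP/(_ i j) : (M k)^T = M k.
    by apply: frechet_normal_stiefel_trmx_sym => //; rewrite -frechet_subdiff_gfunE.
  by rewrite mxE.
have M_cvg i j : (fun k => M k i j) @ \oo --> ((V - A) *m Q^T) i j.
  apply: cvg_mulmx_entry => [|{}i {}j].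
    by apply: cvg_frob_entry; under eq_cvg do rewrite opprB addrA subrK.
  by rewrite mxE; under eq_cvg do rewrite mxE; exact: cvg_frob_entry.
apply/matrixP => i j; rewrite mxE; apply: (cvg_unique (@Rhausdorff R) (M_cvg j i)) => /=.
by under eq_cvg do rewrite M_sym; exact: M_cvg.
Qed.

Lemma dist0_attained (R : realType) m n (S : set 'M[R]_(m, n)) V0 :
  S V0 -> (forall V, S V -> frob V0 <= frob V) -> dist0 S = (frob V0)%:E.
Proof.
move=> SV0 hmin; apply/eqP; rewrite eq_le; apply/andP; split.
  by apply: ereal_inf_lbound; exists V0.
by apply/ereal_infP => _ [V SV <-]; rewrite lee_fin hmin.
Qed.

Lemma frob_add_half_bounds (R : realType) m n (U W : 'M[R]_(m, n)) : mxdot U W = 0 ->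
  2^-1 * frob (U + W) <= frob (U + 2^-1 *: W) <= frob (U + W).
Proof.
move=> UW; have UW2 : mxdot U (2^-1 *: W) = 0 by rewrite mxdotZr UW mulr0.
have U2 := sqr_ge0 (frob U); have W2 := sqr_ge0 (frob W).
apply/andP; split; rewrite -ler_sqr ?nnegrE ?mulr_ge0 ?invr_ge0 ?frob_ge0 // ?exprMn.
all: rewrite (frob_sqrD_orth UW) (frob_sqrD_orth UW2) frobZ exprMn ger0_norm ?invr_ge0 //.
all: lra.
Qed.

Lemma stiefel_proj_half_bounds (R : realType) d K (Q X : 'M[R]_(d, K)) : stiefel Q ->
  2^-1 * frob X <= frob ((1%:M - 2^-1 *: (Q *m Q^T)) *m X) <= frob X.
Proof.
rewrite /stiefel /= => QtQ; set P := Q *m (Q^T *m X).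
have orth : mxdot (X - P) P = 0.
  by rewrite mxdotC mxdot_mull mulmxBr !mulmxA QtQ mul1mx subrr /mxdot mulmx0 mxtrace0.
rewrite mulmxBl mul1mx -scalemxAl -mulmxA -/P; clearbody P.
have -> : X - 2^-1 *: P = (X - P) + 2^-1 *: P.
  by apply/matrixP => i j; rewrite !mxE; field.
by have := frob_add_half_bounds orth; rewrite subrK.
Qed.

Definition symmx (R : realType) n (M : 'M[R]_n) : 'M[R]_n := 2^-1 *: (M + M^T).

Lemma tr_symmx (R : realType) n (M : 'M[R]_n) : (symmx M)^T = symmx M.
Proof. by apply/matrixP => i j; rewrite !mxE addrC. Qed.

Lemma tr_subr_symmx (R : realType) n (M : 'M[R]_n) : (M - symmx M)^T = - (M - symmx M).
Proof. by apply/matrixP => i j; rewrite !mxE; field. Qed.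

Section LeastSubgradient.
Variables (R : realType) (d K : nat) (A : 'M[R]_(d, K)).

Definition least_subgrad Q := A - Q *m symmx (Q^T *m A).

Lemma half_proj_residualE Q : stiefel Q ->
  (1%:M - 2^-1 *: (Q *m Q^T)) *m (A - Q *m A^T *m Q) = least_subgrad Q.
Proof.
rewrite /stiefel /= => hQ.
have QQtQ : Q *m Q^T *m (Q *m A^T *m Q) = Q *m A^T *m Q.
  by rewrite -!mulmxA (mulmxA Q^T) hQ mul1mx.
rewrite mulmxBl mul1mx -scalemxAl mulmxBr QQtQ /least_subgrad /symmx trmx_mul trmxK.
rewrite -scalemxAr mulmxDr !mulmxA.
by move: (Q *m A^T *m Q) (Q *m Q^T *m A) => X Y; apply/matrixP => i j; rewrite !mxE; field.
Qed.

Lemma least_subgrad_mem Q : stiefel Q -> limiting_subdiff (gfun A) Q (least_subgrad Q).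
Proof.
move=> hQ; split; first by rewrite gfun_stiefel.
exists (fun=> Q), (fun=> least_subgrad Q); split.
  move=> _; rewrite frechet_subdiff_gfunE // /least_subgrad addrAC subrr add0r -mulmxN.
  by apply: frechet_normal_stiefel_sym => //; rewrite raddfN /= tr_symmx.
by rewrite !subrr frob0; split; [|split]; exact: cvg_cst.
Qed.

Lemma least_subgrad_le Q V : limiting_subdiff (gfun A) Q V ->
  frob (least_subgrad Q) <= frob V.
Proof.
move=> /limiting_subdiff_gfun_sym[hQ hN]; move: (hQ); rewrite /stiefel /= => QtQ.
set V0 := least_subgrad Q; set D := V - V0.
have DQt_sym : (D *m Q^T)^T = D *m Q^T.
  rewrite /D /V0 /least_subgrad opprB addrA addrAC mulmxDl raddfD /= hN.
  by rewrite !trmx_mul trmxK tr_symmx mulmxA.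
have DE : D = Q *m (D^T *m Q).
  by rewrite -[D in LHS]mulmx1 -QtQ mulmxA -DQt_sym trmx_mul trmxK mulmxA.
have DtQ_sym : (D^T *m Q)^T = D^T *m Q.
  by rewrite trmx_mul trmxK {1}DE !mulmxA QtQ mul1mx.
have QtV0_skew : (Q^T *m V0)^T = - (Q^T *m V0).
  by rewrite /V0 /least_subgrad mulmxBr mulmxA QtQ mul1mx tr_subr_symmx.
have orth : mxdot V0 D = 0.
  by rewrite mxdotC DE mxdot_mull (mxdot_sym_skew DtQ_sym QtV0_skew).
have -> : V = V0 + D by rewrite /D addrC subrK.
by rewrite -ler_sqr ?nnegrE ?frob_ge0 // (frob_sqrD_orth orth) lerDl sqr_ge0.
Qed.

End LeastSubgradient.

Theorem proposition1 (R : realType) (d K : nat) (hKd : (K <= d)%N)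
    (A : 'M[R]_(d, K)) :
  (forall Q : 'M[R]_(d, K), stiefel Q ->
     let RQ := A - Q *m A^T *m Q in
     dist0 (limiting_subdiff (gfun A) Q)
       = (frob ((1%:M - 2^-1 *: (Q *m Q^T)) *m RQ))%:E /\
     ((2^-1 * frob RQ)%:E <= dist0 (limiting_subdiff (gfun A) Q))%E /\
     (dist0 (limiting_subdiff (gfun A) Q) <= (frob RQ)%:E)%E) /\
  (forall Q : 'M[R]_(d, K),
     limiting_subdiff (gfun A) Q 0 <-> stiefel Q /\ A - Q *m A^T *m Q = 0).
Proof.
split=> [Q hQ RQ|Q].
  have dist0E : dist0 (limiting_subdiff (gfun A) Q) =
      (frob ((1%:M - 2^-1 *: (Q *m Q^T)) *m RQ))%:E.
    rewrite /RQ half_proj_residualE //.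
    by apply: dist0_attained; [exact: least_subgrad_mem | exact: least_subgrad_le].
  by rewrite dist0E !lee_fin; have /andP[-> ->] := stiefel_proj_half_bounds RQ hQ.
split=> [/limiting_subdiff_gfun_sym[hQ]|[hQ hRQ]].
  rewrite sub0r mulNmx raddfN /= trmx_mul trmxK => /oppr_inj AQt_sym; split=> //.
  by rewrite AQt_sym -mulmxA hQ mulmx1 subrr.
by have := least_subgrad_mem A hQ; rewrite -half_proj_residualE // hRQ mulmx0.
Qed.
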